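(* Let $\rho_{AB}\in\mathcal{S}_\le(\mathcal{H}_{AB})$ and let $\{P^i_A\}_{i\in I}$ be a collection of projectors forming a projective measurement on $\mathcal{H}_A$. For each $i$ with $p_i:=\mathrm{tr}[P^i_A\rho_{AB}]\ne0$ let $\rho^i_{AB}=\frac1{p_i}P^i_A\rho_{AB}P^i_A$. Then $$I_{\max}(A:B)_\rho\ge\max_i I_{\max}(A:B)_{\rho^i},$$ the maximum ranging over all $i$ with $p_i\neq0$.
   Context: Finite-dimensional Hilbert spaces; logarithms base 2. $\mathcal{S}_\le(\mathcal{H})$: positive semidefinite operators of trace $\le1$; $\mathcal{S}_=(\mathcal{H})$: trace 1. $D_{\max}(\rho\|\sigma)=\inf\{\lambda\in\mathbb{R}:2^\lambda\sigma\ge\rho\}$. $I_{\max}(A:B)_\rho=\inf_{\sigma_B\in\mathcal{S}_=(\mathcal{H}_B)}D_{\max}(\rho_{AB}\|\rho_A\otimes\sigma_B)$. *)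

(* Complex numbers: an arbitrary numClosedFieldType C
   (algebraically closed field with conjugation and the induced partial order;
   "0 <= z" means z is a nonnegative real). *)
From HB Require Import structures.
From mathcomp Require Import all_boot all_order all_algebra.
Set Implicit Arguments. Unset Strict Implicit. Unset Printing Implicit Defensive.
Import Order.TTheory GRing.Theory Num.Theory.
Local Open Scope ring_scope.

Section QDefs.
Variable C : numClosedFieldType.

Definition adjmx m n (M : 'M[C]_(m, n)) : 'M[C]_(n, m) := (map_mx Num.conj M)^T.

Definition psd n (M : 'M[C]_n) : Prop :=
  forall v : 'cV[C]_n, 0 <= (adjmx v *m M *m v) 0 0.

Definition loewner n (M N : 'M[C]_n) : Prop := psd (N - M).

Definition subnormalized_state n (rho : 'M[C]_n) : Prop := psd rho /\ \tr rho <= 1.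
Definition normalized_state n (rho : 'M[C]_n) : Prop := psd rho /\ \tr rho = 1.

Definition projector n (P : 'M[C]_n) : Prop := P *m P = P /\ adjmx P = P.

Definition projective_measurement (I : finType) n (P : I -> 'M[C]_n) : Prop :=
  (forall i, projector (P i)) /\ \sum_(i : I) P i = 1%:M.

(* H_AB = H_A (x) H_B = C^(dA*dB), basis |i>|k> indexed by mxvec_index i k *)
Definition tsplit dA dB (x : 'I_(dA * dB)) : 'I_dA * 'I_dB :=
  enum_val (cast_ord (esym (@mxvec_cast dA dB)) x).

Definition tensmx dA dB (M : 'M[C]_dA) (N : 'M[C]_dB) : 'M[C]_(dA * dB) :=
  \matrix_(x, y) (M (tsplit x).1 (tsplit y).1 * N (tsplit x).2 (tsplit y).2).

Definition ptraceB dA dB (M : 'M[C]_(dA * dB)) : 'M[C]_dA :=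
  \matrix_(i, j) \sum_(k < dB) M (mxvec_index i k) (mxvec_index j k).

(* D_max(rho||sigma) = inf { lambda in R : 2^lambda sigma >= rho }.
   We work with mu = 2^lambda, i.e. mu ranges over the positive reals:
   the set of admissible values 2^lambda is *)
Definition Dmax_feasible n (rho sigma : 'M[C]_n) (mu : C) : Prop :=
  0 < mu /\ loewner rho (mu *: sigma).

(* I_max(A:B)_rho = inf_{sigma_B in S_=(H_B)} D_max(rho_AB || rho_A (x) sigma_B)
   = log2 of the infimum of the set of values mu such that some normalized
   sigma_B has  rho_AB <= mu * rho_A (x) sigma_B. *)
Definition Imax_feasible dA dB (rho : 'M[C]_(dA * dB)) (mu : C) : Prop :=
  exists sigma : 'M[C]_dB, normalized_state sigma /\
    Dmax_feasible rho (tensmx (ptraceB rho) sigma) mu.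

(* The (extended-real) infimum cannot be formed in a general numeric field;
   we express "I_max(A:B)_rho >= I_max(A:B)_tau" (i.e. inf S >= inf T, with
   log2 monotone) through lower bounds:  every lower bound of T is a lower
   bound of S.  In a complete ordered field (e.g. the reals, possibly with
   inf = -oo / +oo) this is exactly inf S >= inf T.  Lower bounds are taken
   in the log scale, i.e. as 2^l with l real, i.e. as positive reals ell. *)
Definition Imax_ge dA dB (rho tau : 'M[C]_(dA * dB)) : Prop :=
  forall ell : C, 0 < ell ->
    (forall mu, Imax_feasible tau mu -> ell <= mu) ->
    (forall mu, Imax_feasible rho mu -> ell <= mu).

End QDefs.

From HB Require Import structures.
From mathcomp Require Import all_boot all_order all_algebra.
From mathcomp Require Import ring.
Set Implicit Arguments. Unset Strict Implicit. Unset Printing Implicit Defensive.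
Import Order.TTheory GRing.Theory Num.Theory.
Local Open Scope ring_scope.

(* If [rho <= mu rho_A (x) sigma], conjugating both sides by [P (x) 1] gives
   [P rho P <= mu (P rho_A P) (x) sigma], and [P rho_A P] is the reduced state of
   [P rho P].  Rescaling by [1/p_i] then shows that every value [2^lambda]
   admissible for [rho] is admissible for [rho_i], so the infimum defining
   [I_max(A:B)_rho] is taken over a smaller set. *)

Section Tensor.
Variable C : numClosedFieldType.

Lemma tsplitK dA dB (a : 'I_dA) (c : 'I_dB) : tsplit (mxvec_index a c) = (a, c).
Proof. by rewrite /tsplit /mxvec_index cast_ordK enum_rankK. Qed.

Lemma sum_mxvec_index dA dB (F : 'I_(dA * dB) -> C) :
  \sum_z F z = \sum_(a < dA) \sum_(c < dB) F (mxvec_index a c).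
Proof.
rewrite pair_bigA /= (reindex (uncurry (@mxvec_index dA dB))) //.
  by apply: eq_bigr => -[a c].
exists (@tsplit dA dB) => [[a c] _|k _] /=; first by rewrite tsplitK.
by case/mxvec_indexP: k => a c; rewrite tsplitK.
Qed.

Lemma tensmxE dA dB (M : 'M[C]_dA) (N : 'M[C]_dB) a c b d :
  tensmx M N (mxvec_index a c) (mxvec_index b d) = M a b * N c d.
Proof. by rewrite mxE !tsplitK. Qed.

Lemma tensmx_mul dA dB (A A' : 'M[C]_dA) (B B' : 'M[C]_dB) :
  tensmx A B *m tensmx A' B' = tensmx (A *m A') (B *m B').
Proof.
apply/matrixP => x y; case/mxvec_indexP: x => a c; case/mxvec_indexP: y => b d.
rewrite mxE sum_mxvec_index tensmxE !mxE big_distrl /=; apply: eq_bigr => e _.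
rewrite big_distrr /=; apply: eq_bigr => f _.
by rewrite !tensmxE; ring.
Qed.

Lemma tensmxZl dA dB (A : 'M[C]_dA) (B : 'M[C]_dB) c :
  tensmx (c *: A) B = c *: tensmx A B.
Proof. by apply/matrixP => x y; rewrite !mxE mulrA. Qed.

Lemma adjmx_mul m n p (A : 'M[C]_(m, n)) (B : 'M[C]_(n, p)) :
  adjmx (A *m B) = adjmx B *m adjmx A.
Proof. by rewrite /adjmx map_mxM trmx_mul. Qed.

Lemma adjmx1 n : adjmx (1%:M : 'M[C]_n) = 1%:M.
Proof. by rewrite /adjmx map_mx1 trmx1. Qed.

Lemma adjmx_tensmx dA dB (M : 'M[C]_dA) (N : 'M[C]_dB) :
  adjmx (tensmx M N) = tensmx (adjmx M) (adjmx N).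
Proof.
apply/matrixP => x y; case/mxvec_indexP: x => a c; case/mxvec_indexP: y => b d.
by rewrite !mxE !tsplitK /= rmorphM.
Qed.

Lemma sum_delta_l n (F : 'I_n -> C) c : \sum_(k < n) ((c == k)%:R * F k) = F c.
Proof.
rewrite (bigD1 c) //= eqxx mul1r big1 ?addr0 // => k nkc.
by rewrite eq_sym (negbTE nkc) mul0r.
Qed.

Lemma sum_delta_r n (F : 'I_n -> C) c : \sum_(k < n) (F k * (k == c)%:R) = F c.
Proof. by rewrite -(sum_delta_l F c); apply: eq_bigr => k _; rewrite mulrC eq_sym. Qed.

Lemma mul_tensmx1_mxE dA dB (A : 'M[C]_dA) (M : 'M[C]_(dA * dB)) a c y :
  (tensmx A 1%:M *m M) (mxvec_index a c) y
  = \sum_(e < dA) A a e * M (mxvec_index e c) y.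
Proof.
rewrite mxE sum_mxvec_index; apply: eq_bigr => e _.
under eq_bigr => k _ do rewrite tensmxE -mulrA [1%:M _ _]mxE.
by rewrite -big_distrr /= sum_delta_l.
Qed.

Lemma mulmx_tensmx1E dA dB (M : 'M[C]_(dA * dB)) (B : 'M[C]_dA) x b d :
  (M *m tensmx B 1%:M) x (mxvec_index b d)
  = \sum_(f < dA) M x (mxvec_index f d) * B f b.
Proof.
rewrite mxE sum_mxvec_index; apply: eq_bigr => f _.
under eq_bigr => k _ do rewrite tensmxE [1%:M _ _]mxE mulrA.
by rewrite sum_delta_r.
Qed.

Lemma ptraceB_conj dA dB (M : 'M[C]_(dA * dB)) (A B : 'M[C]_dA) :
  ptraceB (tensmx A 1%:M *m M *m tensmx B 1%:M) = A *m ptraceB M *m B.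
Proof.
apply/matrixP => i j; rewrite !mxE.
under eq_bigr => k _ do rewrite mulmx_tensmx1E.
under eq_bigr => k _ do under eq_bigr => f _ do
  rewrite mul_tensmx1_mxE big_distrl /=.
rewrite exchange_big /=; apply: eq_bigr => f _.
rewrite !mxE big_distrl /= exchange_big /=; apply: eq_bigr => e _.
by rewrite !mxE big_distrr big_distrl.
Qed.

Lemma ptraceBZ dA dB (M : 'M[C]_(dA * dB)) c : ptraceB (c *: M) = c *: ptraceB M.
Proof.
apply/matrixP => i j; rewrite !mxE big_distrr /=.
by apply: eq_bigr => k _; rewrite mxE.
Qed.

Lemma psd_conj n (M Q : 'M[C]_n) : psd M -> psd (adjmx Q *m M *m Q).
Proof. by move=> psdM v; have := psdM (Q *m v); rewrite adjmx_mul !mulmxA. Qed.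

Lemma psdZ n (M : 'M[C]_n) c : 0 <= c -> psd M -> psd (c *: M).
Proof. by move=> c_ge0 psdM v; rewrite -scalemxAr -scalemxAl mxE mulr_ge0. Qed.

Lemma psd_mxtrace_ge0 n (M : 'M[C]_n) : psd M -> 0 <= \tr M.
Proof.
move=> psdM; apply: sumr_ge0 => i _.
have := psdM (delta_mx i 0); rewrite /adjmx; set D := map_mx _ _.
have -> : D = delta_mx i 0 by apply/matrixP => x y; rewrite !mxE rmorph_nat.
by rewrite trmx_delta -rowE -colE !mxE.
Qed.

Lemma loewner_conj n (M N Q : 'M[C]_n) :
  loewner M N -> loewner (adjmx Q *m M *m Q) (adjmx Q *m N *m Q).
Proof. by move/(psd_conj Q); rewrite /loewner mulmxBr mulmxBl. Qed.

Lemma loewnerZ n (M N : 'M[C]_n) c :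
  0 <= c -> loewner M N -> loewner (c *: M) (c *: N).
Proof. by move=> c_ge0; rewrite /loewner -scalerBr; apply: psdZ. Qed.

Lemma Imax_feasible_conj dA dB (rho : 'M[C]_(dA * dB)) (A : 'M[C]_dA) mu :
  Imax_feasible rho mu ->
  Imax_feasible (tensmx (adjmx A) 1%:M *m rho *m tensmx A 1%:M) mu.
Proof.
move=> [sigma [state_sigma [mu_gt0 rho_le]]]; exists sigma; split=> //; split=> //.
have := loewner_conj (tensmx A 1%:M) rho_le.
rewrite adjmx_tensmx adjmx1 -scalemxAr -scalemxAl !tensmx_mul mul1mx mulmx1.
by rewrite ptraceB_conj.
Qed.

Lemma Imax_feasibleZ dA dB (rho : 'M[C]_(dA * dB)) c mu :
  0 <= c -> Imax_feasible rho mu -> Imax_feasible (c *: rho) mu.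
Proof.
move=> c_ge0 [sigma [state_sigma [mu_gt0 rho_le]]]; exists sigma; split=> //.
split=> //; rewrite ptraceBZ tensmxZl scalerA mulrC -scalerA.
exact: loewnerZ.
Qed.

Lemma Imax_ge_of_feasible dA dB (rho tau : 'M[C]_(dA * dB)) :
  (forall mu, Imax_feasible rho mu -> Imax_feasible tau mu) -> Imax_ge rho tau.
Proof. by move=> feas ell _ lb mu /feas; apply: lb. Qed.

End Tensor.

Theorem mainTheorem14 (C : numClosedFieldType) (dA dB : nat)
  (rho : 'M[C]_(dA * dB)) (I : finType) (P : I -> 'M[C]_dA) :
  subnormalized_state rho ->
  projective_measurement P ->
  forall i : I,
    let p_i := \tr (tensmx (P i) 1%:M *m rho) in
    p_i != 0 ->
    let rho_i := p_i^-1 *: (tensmx (P i) 1%:M *m rho *m tensmx (P i) 1%:M) in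
    Imax_ge rho rho_i.
Proof.
move=> [psd_rho _] [proj _] i p _ rho_i; have [PP P_adj] := proj i.
set Q := tensmx (P i) 1%:M in p rho_i *.
have Q_adj : adjmx Q = Q by rewrite adjmx_tensmx P_adj adjmx1.
have p_ge0 : 0 <= p.
  have <- : \tr (adjmx Q *m rho *m Q) = p.
    by rewrite mxtrace_mulC mulmxA Q_adj tensmx_mul PP mul1mx.
  exact/psd_mxtrace_ge0/psd_conj.
apply: Imax_ge_of_feasible => mu feas.
apply: Imax_feasibleZ; first by rewrite invr_ge0.
by rewrite -{1}Q_adj /Q adjmx_tensmx adjmx1; apply: Imax_feasible_conj.
Qed.
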